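(* Let $p$ be a prime, $\sigma$ a $p$-uniform morphism on $\mathcal A_m$ and $a\in\mathbb{F}_p$. Then for every $n\in\mathbb{N}$, $M_{\sigma^n}(a)=M_\sigma(a)^n$.
   Context: $\mathcal A_m=\{0,\dots,m-1\}$. For $W=w_0\cdots w_{r-1}\in\mathcal A_m^*$ and $j\in\mathcal A_m$, $\beta_{W,j}(T)=\sum_{i:\,w_i=j}T^{r-1-i}\in\mathbb{F}_p[T]$ (zero if $j$ does not occur). For a uniform morphism $\tau$ on $\mathcal A_m$, $M_\tau(T)=(\beta_{\tau(i),j}(T))_{0\le i,j\le m-1}$, and $M_\tau(a)$ denotes its evaluation at $T=a$. *)

From HB Require Import structures.
From mathcomp Require Import all_boot all_order all_algebra.
Set Implicit Arguments. Unset Strict Implicit. Unset Printing Implicit Defensive.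
Import GRing.Theory.
Local Open Scope ring_scope.

(* Alphabet A_m = 'I_m; words are seq 'I_m.  A morphism on A_m is given by
   its images of letters. *)
Definition morphism (m : nat) := 'I_m -> seq 'I_m.

Definition uniform (m k : nat) (tau : morphism m) : Prop :=
  forall i, size (tau i) = k.

Definition morph_word (m : nat) (tau : morphism m) (w : seq 'I_m) : seq 'I_m :=
  flatten (map tau w).

Definition morph_iter (m : nat) (n : nat) (tau : morphism m) : morphism m :=
  fun i => iter n (morph_word tau) [:: i].

Definition beta (p m : nat) (W : seq 'I_m) (j : 'I_m) : {poly 'F_p} :=
  \sum_(i < size W | tnth (in_tuple W) i == j) 'X^(size W - 1 - i)%N.

Definition Mpoly (p m : nat) (tau : morphism m) : 'M[{poly 'F_p}]_m :=
  \matrix_(i < m, j < m) beta p (tau i) j.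

Definition Meval (p m : nat) (tau : morphism m) (a : 'F_p) : 'M['F_p]_m :=
  map_mx (fun q : {poly 'F_p} => q.[a]) (Mpoly p tau).

(** The coefficient of [T^e] in [beta_{W,j}] records that letter [j] sits
    [e] places before the end of [W].  Hence [beta_{UV,j} = beta_{U,j} T^|V| +
    beta_{V,j}], and for a [k]-uniform [tau] the letters of [tau(W)] coming from
    position [e] of [W] sit [k e] places (plus an offset inside [tau(w)]) before
    the end, i.e. [M_{tau o rho}(T) = M_rho(T^k) M_tau(T)].  Over [F_p] we have
    [a^p = a], so evaluating at [a] turns this into [M_{tau o rho}(a) =
    M_rho(a) M_tau(a)], and the corollary follows by induction on [n]. *)

From mathcomp Require Import all_boot all_order all_algebra all_field.
Set Implicit Arguments. Unset Strict Implicit. Unset Printing Implicit Defensive.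
Import GRing.Theory.
Local Open Scope ring_scope.

Section Beta.
Variables (p m : nat).

Lemma beta_nil (j : 'I_m) : beta p [::] j = 0.
Proof. by rewrite /beta big_ord0. Qed.

Lemma beta_cons (x : 'I_m) W j :
  beta p (x :: W) j = (if x == j then 'X^(size W) else 0) + beta p W j.
Proof.
rewrite /beta big_mkcond big_ord_recl /= subn1 subn0 -big_mkcond /=.
congr (_ + _); apply: eq_big => [i|i _]; first by rewrite !(tnth_nth x).
by rewrite -subnDA.
Qed.

Lemma beta_cat (U V : seq 'I_m) j :
  beta p (U ++ V) j = beta p U j * 'X^(size V) + beta p V j.
Proof.
elim: U => [|x U IH] /=; first by rewrite beta_nil mul0r add0r.
rewrite !beta_cons IH size_cat exprD mulrDl addrA.
by case: (x == j); rewrite ?mul0r // mulrC.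
Qed.

Lemma beta_seq1 (i j : 'I_m) : beta p [:: i] j = (i == j)%:R.
Proof. by rewrite beta_cons beta_nil addr0; case: (i == j). Qed.

End Beta.

Section UniformMorphism.
Variables (m k : nat) (tau : morphism m).
Hypothesis tau_unif : uniform k tau.

Lemma size_morph_word W : size (morph_word tau W) = (k * size W)%N.
Proof.
elim: W => [|x W IH]; first by rewrite muln0.
by rewrite /morph_word /= size_cat -/(morph_word tau W) IH tau_unif mulnS.
Qed.

Lemma beta_morph_word p W j :
  beta p (morph_word tau W) j =
  \sum_(l < m) (beta p W l \Po 'X^k) * beta p (tau l) j.
Proof.
elim: W => [|x W IH].
  by rewrite beta_nil big1 // => l _; rewrite beta_nil comp_poly0 mul0r.
rewrite /morph_word /= -/(morph_word tau W) beta_cat IH size_morph_word.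
under eq_bigr do rewrite beta_cons comp_polyD mulrDl.
rewrite big_split /=; congr (_ + _).
rewrite (bigD1 x) //= eqxx comp_Xn_poly -exprM mulrC big1 ?addr0 // => l.
by rewrite eq_sym => /negbTE ->; rewrite comp_poly0 mul0r.
Qed.

Lemma Mpoly_morph_word_comp p (rho : morphism m) :
  Mpoly p (fun i => morph_word tau (rho i)) =
  map_mx (comp_poly 'X^k) (Mpoly p rho) *m Mpoly p tau.
Proof.
apply/matrixP => i j; rewrite !mxE beta_morph_word.
by apply: eq_bigr => l _; rewrite !mxE.
Qed.

Lemma Meval_morph_word_comp p (rho : morphism m) (a : 'F_p) :
  a ^+ k = a ->
  Meval (fun i => morph_word tau (rho i)) a = Meval rho a *m Meval tau a.
Proof.
move=> ak; rewrite /Meval Mpoly_morph_word_comp.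
change (fun q : {poly 'F_p} => q.[a]) with (horner_eval a).
rewrite map_mxM -map_mx_comp; congr (_ *m _); apply: eq_map_mx => q /=.
by rewrite !horner_evalE horner_comp hornerXn ak.
Qed.

End UniformMorphism.

Lemma morph_iterS m n (tau : morphism m) :
  morph_iter n.+1 tau = (fun i => morph_word tau (morph_iter n tau i)).
Proof. by []. Qed.

Lemma Meval_morph_iter0 p m (tau : morphism m) (a : 'F_p) :
  Meval (morph_iter 0 tau) a = 1%:M.
Proof. by apply/matrixP => i j; rewrite !mxE beta_seq1 hornerMn -polyC1 hornerC. Qed.

Lemma expr_Fp_prime p (a : 'F_p) : prime p -> a ^+ p = a.
Proof. by move=> p_pr; rewrite -{2}(expf_card a) card_Fp. Qed.

Theorem corollary4p13 (p m : nat) (hp : prime p) (sigma : morphism m)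
  (hsigma : uniform p sigma) (a : 'F_p) (n : nat) :
  Meval (morph_iter n sigma) a = (Meval sigma a) ^+ n.
Proof.
elim: n => [|n IH]; first by rewrite Meval_morph_iter0.
rewrite exprSr -IH -mulmxE morph_iterS.
exact (Meval_morph_word_comp hsigma _ (expr_Fp_prime a hp)).
Qed.
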